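(* Let $r\ge1$ and $N\ge r$ be integers, let $a_{-r},\dots,a_0$ be coefficients with $a_{-r}\neq0$ and $|a_0|<1$, and let $B\in\mathcal M_{r,N}(\mathbb C)$ be a constant matrix whose left $r\times r$ block $B[1:r,1:r]$ is invertible. For every $z\in\overline{\mathcal U}$ there exists a unique matrix $C(z)\in\mathcal M_r(\mathbb C)$ such that \[ B\,\pi(U)=\big(0_{r\times(N-r)}\ \big|\ C(z)\big)\,\pi(U)\quad\text{for all }U\in\mathcal E^s(z). \] Moreover the entries of $C(z)$ are polynomial functions of $z$, and $\det C(z)$ is a polynomial in $z$ of degree exactly $N-r$.
   Context: $\overline{\mathcal U}=\{z\in\mathbb C:|z|\ge1\}$. For $z\in\overline{\mathcal U}$, $\mathcal E^s(z)$ denotes the (r-dimensional) space of complex sequences $U=(U_j)_{j\ge -r}$ satisfying $zU_j=\sum_{k=-r}^{0}a_kU_{j+k}$ for all $j\ge 0$. The map $\pi$ sends such a sequence to its first $N$ components, $\pi(U)=(U_{-r},U_{-r+1},\dots,U_{-r+N-1})^T\in\mathbb C^N$. $0_{r\times(N-r)}$ is the zero matrix, so $(0\,|\,C(z))\in\mathcal M_{r,N}(\mathbb C)$. *)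

From HB Require Import structures.
From mathcomp Require Import all_boot all_order all_algebra.
From mathcomp Require Import complex.
From mathcomp Require Import reals.
Set Implicit Arguments. Unset Strict Implicit. Unset Printing Implicit Defensive.
Import Order.TTheory GRing.Theory Num.Theory.
Local Open Scope ring_scope.

Section Defs.
Variable R : realType.
Local Notation C := (R[i]).

(* A sequence U = (U_j)_{j >= -r} is modelled as U : int -> C (values at j < -r are irrelevant).
   Coefficients a_{-r},...,a_0 are modelled as a : int -> C (only a_{-r..0} are used). *)

Definition in_Es (r : nat) (a : int -> C) (z : C) (U : int -> C) : Prop :=
  forall j : int, (0 <= j)%R ->
    z * U j = \sum_(i < r.+1) a (i%:Z - r%:Z) * U (j + (i%:Z - r%:Z)).

Definition piU (r N : nat) (U : int -> C) : 'cV[C]_N :=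
  \col_(i < N) U (i%:Z - r%:Z).

Definition leftblock (r N : nat) (hrN : (r <= N)%N) (B : 'M[C]_(r, N)) : 'M[C]_r :=
  \matrix_(i < r, j < r) B i (widen_ord hrN j).

Definition zeroC (r N : nat) (hrN : (r <= N)%N) (M : 'M[C]_r) : 'M[C]_(r, N) :=
  castmx (erefl r, subnK hrN) (row_mx (0 : 'M[C]_(r, N - r)) M).

End Defs.

From HB Require Import structures.
From mathcomp Require Import all_boot all_order all_algebra all_fingroup.
From mathcomp Require Import ring zify.
From mathcomp Require Import complex reals.
Import Order.TTheory GRing.Theory Num.Theory.
Set Implicit Arguments. Unset Strict Implicit. Unset Printing Implicit Defensive.
Local Open Scope ring_scope.

(* Write N = m + r. The recurrence for j = 0, ..., m - 1 involves only pi(U), and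
   reads L(z) pi(U) = 0 for the m x (m + r) pencil L = X S - A. Completed by the
   rows (0 | 1_r), L becomes a square polynomial matrix which is triangular with
   constant determinant (-a_{-r})^m, so its inverse Q is again polynomial. Hence a
   kernel vector Y of L(z) is Q(z) (0; w), w being its last r entries, and
   B Y = P(z) w where P consists of the last r columns of B Q. Every w occurs, and
   since z <> a_0 (because |a_0| < 1 <= |z|) every kernel vector is pi(U) for some
   U in E^s(z); this gives existence and uniqueness of C(z) = P(z). Finally
   det P = (-a_{-r})^{-m} det (L; B); moving the first r columns to the end, the
   Schur complement of the invertible block B[1:r,1:r] in (L; B) is a
   characteristic matrix of size m, so det P has degree exactly m = N - r. *)

Section RecurrenceExtension.
Variables (F : fieldType) (r n0 : nat) (c : 'I_r -> F) (y : nat -> F).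

Fixpoint rec_prefix (k : nat) : seq F :=
  if k is k'.+1 then
    let s := rec_prefix k' in
    rcons s (if (k' < n0)%N then y k' else \sum_(i < r) c i * nth 0 s (k' - r + i))
  else [::].

Definition rec_ext (n : nat) : F := nth 0 (rec_prefix n.+1) n.

Lemma size_rec_prefix k : size (rec_prefix k) = k.
Proof. by elim: k => //= k IH; rewrite size_rcons IH. Qed.

Lemma nth_rec_prefix k n : (n < k)%N -> nth 0 (rec_prefix k) n = rec_ext n.
Proof.
elim: k => // k IH; rewrite ltnS leq_eqVlt => /orP [/eqP -> //|lt_nk].
by rewrite [rec_prefix _]/= nth_rcons size_rec_prefix lt_nk IH.
Qed.

Lemma rec_ext_init n : (n < n0)%N -> rec_ext n = y n.
Proof. by move=> lt_n; rewrite /rec_ext /= nth_rcons size_rec_prefix ltnn eqxx lt_n. Qed.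

Lemma rec_ext_rec n : (n0 <= n + r)%N ->
  rec_ext (n + r) = \sum_(i < r) c i * rec_ext (n + i).
Proof.
move=> le_n; rewrite /rec_ext /= nth_rcons size_rec_prefix ltnn eqxx ltnNge le_n addnK.
by apply: eq_bigr => i _; rewrite nth_rec_prefix // ltn_add2l.
Qed.

End RecurrenceExtension.

Lemma exists_rec_ext (F : fieldType) (r n0 : nat) (c : 'I_r -> F) (y : nat -> F) :
  exists x : nat -> F, (forall n, (n < n0)%N -> x n = y n) /\
    (forall n, (n0 <= n + r)%N -> x (n + r) = \sum_(i < r) c i * x (n + i)).
Proof. by exists (rec_ext n0 c y); split; [exact: rec_ext_init | exact: rec_ext_rec]. Qed.

Section CompletedKernel.
Variables (R : comUnitRingType) (m r : nat) (L : 'M[R]_(m, m + r)).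

Definition complete_mx : 'M[R]_(m + r) := col_mx L (row_mx 0 1%:M).

Lemma mul_complete_mx (Y : 'cV[R]_(m + r)) :
  complete_mx *m Y = col_mx (L *m Y) (dsubmx Y).
Proof.
rewrite mul_col_mx; congr col_mx.
by rewrite -{1}[Y]vsubmxK mul_row_col mul0mx add0r mul1mx.
Qed.

Variable Q : 'M[R]_(m + r).
Hypotheses (QM : Q *m complete_mx = 1%:M) (MQ : complete_mx *m Q = 1%:M).

Lemma kernel_complete_mx (Y : 'cV[R]_(m + r)) :
  L *m Y = 0 -> Y = Q *m col_mx 0 (dsubmx Y).
Proof. by move=> LY0; rewrite -LY0 -mul_complete_mx mulmxA QM mul1mx. Qed.

Lemma complete_mx_inv_kernel (w : 'cV[R]_r) :
  L *m (Q *m col_mx 0 w) = 0 /\ dsubmx (Q *m col_mx 0 w) = w.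
Proof. by apply/eq_col_mx; rewrite -mul_complete_mx mulmxA MQ mul1mx. Qed.

End CompletedKernel.

Lemma det_block_schur (R : comNzRingType) n1 n2 (Aul : 'M[R]_n1) (Aur : 'M_(n1, n2))
    (Adl : 'M_(n2, n1)) (Adr : 'M_n2) (D : 'M_n2) :
  D *m Adr = 1%:M ->
  \det (block_mx Aul Aur Adl Adr) = \det (Aul - Aur *m D *m Adl) * \det Adr.
Proof.
move=> DA; suff -> : block_mx Aul Aur Adl Adr =
    block_mx 1%:M (Aur *m D) 0 1%:M *m block_mx (Aul - Aur *m D *m Adl) 0 Adl Adr.
  by rewrite det_mulmx det_ublock det_lblock !det1 !mul1r.
by rewrite mulmx_block !mul1mx !mul0mx !add0r subrK -mulmxA DA mulmx1.
Qed.

Lemma col_perm_col_mx (R : pzRingType) p n1 n2 (s : 'S_p)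
    (A1 : 'M[R]_(n1, p)) (A2 : 'M_(n2, p)) :
  col_perm s (col_mx A1 A2) = col_mx (col_perm s A1) (col_perm s A2).
Proof. by rewrite !col_permE mul_col_mx. Qed.

Lemma mul_row0_mx (R : pzRingType) p n1 n2 (A : 'M[R]_(p, n2)) (Y : 'cV[R]_(n1 + n2)) :
  row_mx 0 A *m Y = A *m dsubmx Y.
Proof. by rewrite -{1}[Y]vsubmxK mul_row_col mul0mx add0r. Qed.

Section SwapBlocks.
Variables m r : nat.

Definition swap_blocks_fun (j : 'I_(m + r)) : 'I_(m + r) :=
  cast_ord (addnC r m) (unsplit (match split j with inl i => inr i | inr k => inl k end)).

Lemma swap_blocks_fun_inj : injective swap_blocks_fun.
Proof.
move=> j j' /cast_ord_inj /(can_inj unsplitK) eq_jj'; apply: (can_inj splitK).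
by move: eq_jj'; case: (split j) => ?; case: (split j') => ? // [->].
Qed.

Definition swap_blocks : 'S_(m + r) := perm swap_blocks_fun_inj.

Lemma swap_blocks_lshift (i : 'I_m) : val (swap_blocks (lshift r i)) = (i + r)%N.
Proof. by rewrite permE /swap_blocks_fun (unsplitK (inl _)) /= addnC. Qed.

Lemma swap_blocks_rshift (k : 'I_r) : val (swap_blocks (rshift m k)) = k.
Proof. by rewrite permE /swap_blocks_fun (unsplitK (inr _)). Qed.

End SwapBlocks.

Lemma size_det_col_perm (R : idomainType) n (s : 'S_n) (A : 'M[{poly R}]_n) :
  size (\det (col_perm s A)) = size (\det A).
Proof.
rewrite col_permE det_mulmx det_perm.
by case: (odd_perm _); rewrite ?expr1 ?expr0 ?mulrN1 ?mulr1 ?size_polyN.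
Qed.

Lemma sum_delta_natr (R : nzSemiRingType) n k (f : nat -> R) : (k < n)%N ->
  \sum_(c < n) ((c : nat) == k)%:R * f c = f k.
Proof.
move=> lt_kn; under eq_bigr do rewrite mulr_natl mulrb.
by rewrite -big_mkcond big_ord1_eq lt_kn.
Qed.

Lemma map_mx_polyCK (R : comNzRingType) m n (z : R) (A : 'M[R]_(m, n)) :
  map_mx (horner_eval z) (map_mx polyC A) = A.
Proof. by apply/matrixP => i j; rewrite !mxE /= horner_evalE hornerC. Qed.

Section RecurrencePencil.
Variables (F : fieldType) (r m : nat) (a : int -> F).

Definition shift_mx (k : nat) : 'M[F]_(m, m + r) :=
  \matrix_(j < m, c < m + r) ((c : nat) == j + k)%N%:R.

Definition rec_coef_mx : 'M[F]_(m, m + r) :=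
  \sum_(i < r.+1) a (i%:Z - r%:Z) *: shift_mx i.

Definition rec_mx : 'M[{poly F}]_(m, m + r) :=
  'X *: map_mx polyC (shift_mx r) - map_mx polyC rec_coef_mx.

Definition rec_mx_at (z : F) : 'M[F]_(m, m + r) := z *: shift_mx r - rec_coef_mx.

Lemma horner_rec_mx (z : F) : map_mx (horner_eval z) rec_mx = rec_mx_at z.
Proof. by rewrite map_mxB map_mxZ !map_mx_polyCK /= horner_evalE hornerX. Qed.

Lemma mul_shift_mx_col k (v : nat -> F) (j : 'I_m) : (k <= r)%N ->
  (shift_mx k *m \col_(c < m + r) v c) j 0 = v (j + k)%N.
Proof.
move=> le_kr; have lt_jk : (j + k < m + r)%N by have := ltn_ord j; lia.
by rewrite mxE -(sum_delta_natr v lt_jk); apply: eq_bigr => c _; rewrite !mxE.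
Qed.

Lemma rec_residual (z : F) (v : nat -> F) (j : 'I_m) :
  (rec_mx_at z *m \col_(c < m + r) v c) j 0 =
  z * v (j + r)%N - \sum_(i < r.+1) a (i%:Z - r%:Z) * v (j + i)%N.
Proof.
rewrite /rec_mx_at mulmxBl -scalemxAl mulmx_suml mxE [in X in _ + X]mxE.
rewrite [in X in X + _]mxE mul_shift_mx_col // summxE.
by congr (_ - _); apply: eq_bigr => i _; rewrite -scalemxAl mxE mul_shift_mx_col // -ltnS.
Qed.

Lemma rec_mxE (j : 'I_m) (c : 'I_(m + r)) :
  rec_mx j c = 'X *+ ((c : nat) == j + r)%N
               - (\sum_(i < r.+1) a (i%:Z - r%:Z) *+ ((c : nat) == j + i)%N)%:P.
Proof.
rewrite !mxE summxE rmorph_nat mulr_natr; congr (_ - _%:P).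
by apply: eq_bigr => i _; rewrite !mxE mulr_natr.
Qed.

Lemma rec_mx_lower (j : 'I_m) (c : 'I_(m + r)) : (c < j)%N -> rec_mx j c = 0.
Proof.
move=> lt_cj; have ne_c k : ((c : nat) == j + k)%N = false.
  by apply/negbTE; rewrite neq_ltn (leq_trans lt_cj) ?leq_addr.
by rewrite rec_mxE ne_c big1 ?subr0 // => i _; rewrite ne_c.
Qed.

Hypothesis r_gt0 : (0 < r)%N.

Lemma rec_mx_diag (j : 'I_m) : rec_mx j (lshift r j) = - (a (- r%:Z))%:P.
Proof.
have eq_jk k : ((j : nat) == j + k)%N = (k == 0)%N.
  by rewrite -{1}[j : nat]addn0 eqn_add2l eq_sym.
rewrite rec_mxE /= eq_jk eqn0Ngt r_gt0 mulr0n sub0r big_ord_recl /= eq_jk sub0r.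
by rewrite big1 ?addr0 // => i _; rewrite eq_jk.
Qed.

Lemma det_complete_rec_mx : \det (complete_mx rec_mx) = ((- a (- r%:Z)) ^+ m)%:P.
Proof.
rewrite /complete_mx -[rec_mx]hsubmxK -/(block_mx _ _ _ _).
rewrite det_ublock det1 mulr1 -det_tr det_trig.
  rewrite rmorphXn -[m in _ ^+ m]card_ord -prodr_const; apply: eq_bigr => j _.
  by rewrite [_^T _ _]mxE [lsubmx _ _ _]mxE rec_mx_diag rmorphN.
by apply/is_trig_mxP => i j lt_ij; rewrite [_^T _ _]mxE [lsubmx _ _ _]mxE rec_mx_lower.
Qed.

Hypothesis a_r_neq0 : a (- r%:Z) != 0.

Lemma complete_rec_mx_unit : complete_mx rec_mx \in unitmx.
Proof.
rewrite unitmxE det_complete_rec_mx poly_unitE size_polyC coefC /=.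
by rewrite expf_neq0 ?oppr_eq0 // unitfE expf_neq0 ?oppr_eq0.
Qed.

Definition rec_inv : 'M[{poly F}]_(m + r) := invmx (complete_mx rec_mx).

Lemma det_rec_inv : \det rec_inv = ((- a (- r%:Z)) ^+ m)^-1%:P.
Proof. by rewrite det_inv det_complete_rec_mx polyCV. Qed.

Lemma horner_complete_rec_mx (z : F) :
  map_mx (horner_eval z) (complete_mx rec_mx) = complete_mx (rec_mx_at z).
Proof. by rewrite map_col_mx map_row_mx map_mx0 map_mx1 horner_rec_mx. Qed.

Lemma horner_rec_invK (z : F) :
  let Q := map_mx (horner_eval z) rec_inv in
  let M := complete_mx (rec_mx_at z) in
  Q *m M = 1%:M /\ M *m Q = 1%:M.
Proof.
move=> Q M; rewrite /Q /M -horner_complete_rec_mx -!map_mxM.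
by rewrite mulVmx ?mulmxV ?complete_rec_mx_unit // map_mx1.
Qed.

Variable B : 'M[F]_(r, m + r).

Definition boundary_mx : 'M[{poly F}]_r := rsubmx (map_mx polyC B *m rec_inv).

Lemma horner_boundary_mx (z : F) :
  map_mx (horner_eval z) boundary_mx = rsubmx (B *m map_mx (horner_eval z) rec_inv).
Proof. by rewrite map_rsubmx map_mxM map_mx_polyCK. Qed.

Lemma mulmx_rec_kernel (z : F) (Y : 'cV[F]_(m + r)) :
  rec_mx_at z *m Y = 0 ->
  B *m Y = map_mx (horner_eval z) boundary_mx *m dsubmx Y.
Proof.
have [QM MQ] := horner_rec_invK z => /(kernel_complete_mx QM) {1}->.
by rewrite mulmxA -[B *m _]hsubmxK mul_row_col mulmx0 add0r horner_boundary_mx.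
Qed.

Lemma rec_kernel_dsubmx (z : F) (w : 'cV[F]_r) :
  exists2 Y : 'cV[F]_(m + r), rec_mx_at z *m Y = 0 & dsubmx Y = w.
Proof.
have [_ MQ] := horner_rec_invK z.
by case: (complete_mx_inv_kernel MQ w); exists (map_mx (horner_eval z) rec_inv *m col_mx 0 w).
Qed.

Local Notation sigma := (swap_blocks m r).

Lemma col_perm_shift_mx : col_perm sigma (shift_mx r) = row_mx 1%:M 0.
Proof.
apply/matrixP => j c; rewrite -[c]splitK; case: (split c) => k.
  by rewrite row_mxEl !mxE swap_blocks_lshift eqn_add2r eq_sym.
rewrite row_mxEr !mxE swap_blocks_rshift ltn_eqF //.
by rewrite (leq_trans (ltn_ord k)) ?leq_addl.
Qed.

Local Notation coef_sigma := (col_perm sigma rec_coef_mx).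

Lemma col_perm_rec_mx :
  col_perm sigma rec_mx =
  row_mx (char_poly_mx (lsubmx coef_sigma)) (- map_mx polyC (rsubmx coef_sigma)).
Proof.
rewrite /rec_mx !col_permE mulmxBl -scalemxAl -!col_permE -!map_col_perm col_perm_shift_mx.
rewrite -[coef_sigma]hsubmxK row_mxKl row_mxKr !map_row_mx map_mx1 map_mx0.
by rewrite scale_row_mx scalemx1 scaler0 opp_row_mx add_row_mx sub0r.
Qed.

Lemma size_det_rec_col_mx : rsubmx (col_perm sigma B) \in unitmx ->
  size (\det (col_mx rec_mx (map_mx polyC B))) = m.+1.
Proof.
set B1 := rsubmx _ => B1_unit; set B2 := lsubmx (col_perm sigma B).
set K := lsubmx coef_sigma - rsubmx coef_sigma *m invmx B1 *m B2.
rewrite -(size_det_col_perm sigma) col_perm_col_mx col_perm_rec_mx -map_col_perm.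
rewrite -[col_perm sigma B]hsubmxK map_row_mx -/(block_mx _ _ _ _).
rewrite (@det_block_schur _ _ _ _ _ _ _ (map_mx polyC (invmx B1))); last first.
  by rewrite -map_mxM mulVmx // map_mx1.
have -> : char_poly_mx (lsubmx coef_sigma) - (- map_mx polyC (rsubmx coef_sigma))
    *m map_mx polyC (invmx B1) *m map_mx polyC B2 = char_poly_mx K.
  by rewrite !mulNmx opprK -!map_mxM /char_poly_mx /K map_mxB opprD opprK addrA.
have -> : \det (map_mx polyC B1) = (\det B1)%:P by rewrite det_map_mx.
rewrite -/(char_poly K) mulrC size_Cmul ?size_char_poly //.
by rewrite -unitfE -unitmxE.
Qed.

Lemma size_det_boundary_mx : rsubmx (col_perm sigma B) \in unitmx ->
  size (\det boundary_mx) = m.+1.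
Proof.
move=> B1_unit.
have rec_block : col_mx rec_mx (map_mx polyC B) *m rec_inv =
    block_mx 1%:M 0 (lsubmx (map_mx polyC B *m rec_inv)) boundary_mx.
  rewrite mul_col_mx /block_mx /boundary_mx hsubmxK; congr col_mx.
  have -> : rec_mx *m rec_inv = usubmx (complete_mx rec_mx *m rec_inv).
    by rewrite mul_col_mx col_mxKu.
  by rewrite mulmxV ?complete_rec_mx_unit // (scalar_mx_block m r) /block_mx col_mxKu.
have := congr1 determinant rec_block.
rewrite det_lblock det1 mul1r det_mulmx det_rec_inv => <-.
by rewrite mulrC size_Cmul ?invr_eq0 ?expf_neq0 ?oppr_eq0 // size_det_rec_col_mx.
Qed.

End RecurrencePencil.

Section StableSubspace.
Variables (R : realType) (r m : nat) (a : int -> R[i]).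

Lemma in_Es_of_nat_rec (z : R[i]) (x : nat -> R[i]) :
  (forall n, z * x (n + r)%N = \sum_(i < r.+1) a (i%:Z - r%:Z) * x (n + i)%N) ->
  in_Es r a z (fun j => x (absz (j + r%:Z))).
Proof.
move=> x_rec [n|//] _; rewrite -PoszD absz_nat x_rec.
by apply: eq_bigr => i _; rewrite addrA subrK -PoszD absz_nat.
Qed.

Lemma piU_rec_kernel (z : R[i]) (U : int -> R[i]) : in_Es r a z U ->
  rec_mx_at r m a z *m piU r (m + r) U = 0.
Proof.
move=> U_Es; apply/matrixP => j k; rewrite ord1 [RHS]mxE.
rewrite (rec_residual _ _ _ (fun c : nat => U (c%:Z - r%:Z))) PoszD addrK (U_Es j) //.
by apply/eqP; rewrite subr_eq0; apply/eqP/eq_bigr => i _; rewrite PoszD addrA.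
Qed.

Lemma rec_kernel_piU (z : R[i]) (Y : 'cV[R[i]]_(m + r)) :
  z != a 0 -> rec_mx_at r m a z *m Y = 0 ->
  exists2 U, in_Es r a z U & piU r (m + r) U = Y.
Proof.
move=> z_neq_a0 kerY.
pose y n := if insub n is Some i then Y i 0 else 0.
have Y_col : Y = \col_(c < m + r) y c by apply/matrixP => i j; rewrite ord1 mxE /y valK.
have [x [x_init x_rec]] :=
  exists_rec_ext (m + r) (fun i : 'I_r => a (i%:Z - r%:Z) / (z - a 0)) y.
exists (fun j => x (absz (j + r%:Z))); last first.
  by apply/matrixP => i j; rewrite ord1 !mxE subrK absz_nat x_init // /y valK.
apply: in_Es_of_nat_rec => n; have [lt_nm | le_mn] := ltnP n m.
  have := congr1 (fun M : 'cV[R[i]]_m => M (Ordinal lt_nm) 0) kerY.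
  rewrite Y_col rec_residual mxE /= x_init ?ltn_add2r // => /eqP.
  rewrite subr_eq0 => /eqP ->.
  by apply: eq_bigr => i _; rewrite x_init //; have := ltn_ord i; lia.
have z_a0 : z - a 0 != 0 by rewrite subr_eq0.
rewrite big_ord_recr /= subrr x_rec ?leq_add2r //.
have -> : \sum_(i < r) a (i%:Z - r%:Z) / (z - a 0) * x (n + i)%N =
    (\sum_(i < r) a (i%:Z - r%:Z) * x (n + i)%N) / (z - a 0).
  by rewrite mulr_suml; apply: eq_bigr => i _; rewrite mulrAC.
by field.
Qed.

Lemma zeroC_row_mx (hrN : (r <= m + r)%N) (M : 'M[R[i]]_r) : zeroC hrN M = row_mx 0 M.
Proof.
rewrite /zeroC; move: (subnK hrN); move: (m + r - r)%N (addnK r m) => k -> e.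
exact: castmx_id.
Qed.

Lemma leftblock_swap_blocks (hrN : (r <= m + r)%N) (B : 'M[R[i]]_(r, m + r)) :
  leftblock hrN B = rsubmx (col_perm (swap_blocks m r) B).
Proof.
apply/matrixP => i j; rewrite !mxE; congr (B i _).
by apply: val_inj; rewrite swap_blocks_rshift.
Qed.

Hypotheses (r_gt0 : (0 < r)%N) (a_r_neq0 : a (- r%:Z) != 0).
Variables (hrN : (r <= m + r)%N) (B : 'M[R[i]]_(r, m + r)).

Lemma boundary_mx_spec (z : R[i]) (Cz : 'M[R[i]]_r) : z != a 0 ->
  (forall U, in_Es r a z U -> B *m piU r (m + r) U = zeroC hrN Cz *m piU r (m + r) U)
  <-> Cz = map_mx (horner_eval z) (boundary_mx a B).
Proof.
move=> z_neq_a0; split=> [BU|-> U U_Es]; last first.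
  by rewrite zeroC_row_mx mul_row0_mx; apply/mulmx_rec_kernel/piU_rec_kernel.
suff Cz_w (w : 'cV_r) : Cz *m w = map_mx (horner_eval z) (boundary_mx a B) *m w.
  apply/matrixP => i j; have := congr1 (fun M : 'cV[R[i]]_r => M i 0) (Cz_w (delta_mx j 0)).
  by rewrite /= -!colE !mxE.
have [Y kerY <-] := rec_kernel_dsubmx m r_gt0 a_r_neq0 z w.
have [U U_Es piUY] := rec_kernel_piU z_neq_a0 kerY.
rewrite -(mulmx_rec_kernel _ _ _ kerY) // -piUY BU //.
by rewrite zeroC_row_mx mul_row0_mx piUY.
Qed.

End StableSubspace.

Unset Implicit Arguments.

Theorem lemma3p2 (R : realType) (r N : nat) (hr : (0 < r)%N) (hrN : (r <= N)%N)
  (a : int -> R[i]) (ha_r : a (- (r%:Z)) != 0) (ha0 : `|a 0| < 1)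
  (B : 'M[R[i]]_(r, N)) (hB : leftblock hrN B \in unitmx) :
  exists (P : 'M[{poly R[i]}]_r) (p : {poly R[i]}),
    size p = (N - r).+1 /\
    forall z : R[i], 1 <= `|z| ->
      (forall Cz : 'M[R[i]]_r,
         (forall U : int -> R[i], in_Es r a z U ->
            B *m piU r N U = zeroC hrN Cz *m piU r N U)
         <-> Cz = map_mx (fun q : {poly R[i]} => q.[z]) P)
      /\ \det (map_mx (fun q : {poly R[i]} => q.[z]) P) = p.[z].
Proof.
have [m eq_N] : exists m, N = (m + r)%N by exists (N - r)%N; rewrite subnK.
subst N; exists (boundary_mx a B), (\det (boundary_mx a B)); split.
  by rewrite addnK size_det_boundary_mx // -leftblock_swap_blocks.
move=> z z_ge1; have z_neq_a0 : z != a 0.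
  by apply: contraTneq z_ge1 => ->; rewrite lt_geF.
change (fun q : {poly R[i]} => q.[z]) with (horner_eval z).
by split; [move=> Cz; exact: boundary_mx_spec | rewrite det_map_mx].
Qed.
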